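(* Let $\mathcal{Y}=\{\mathsf{y}_1,\mathsf{y}_2,\mathsf{y}_3\}\subset\mathbb{R}^2$ be three non-collinear points and let $X_1,\dots,X_n$ be i.i.d. with the uniform distribution on the triangle $T(\mathcal{Y})$. Then for any $r\in[1,\infty]$ the distribution of the relative density $\rho(\mathcal{X}_n;h,N^r_{\mathcal{Y}})$ of the $r$-factor proximity catch digraph does not depend on $\mathcal{Y}$ (hence not on the geometry of $T(\mathcal{Y})$).
   Context: $T(\mathcal{Y})$ denotes the closed triangle (including interior) with vertices $\mathsf{y}_1,\mathsf{y}_2,\mathsf{y}_3$. Vertex regions: joining the center of mass of $T(\mathcal{Y})$ to the midpoints of its three edges partitions $T(\mathcal{Y})$ into regions $R(\mathsf{y}_1),R(\mathsf{y}_2),R(\mathsf{y}_3)$, with $R(\mathsf{y}_j)$ the one containing $\mathsf{y}_j$. $r$-factor proximity map: for $r\in[1,\infty)$ and $x\in T(\mathcal{Y})\setminus\mathcal{Y}$, let $v(x)$ be the vertex with $x\in R(v(x))$ (ties on region boundaries broken arbitrarily), $e(x)$ the edge opposite $v(x)$, $\ell(x)$ the line through $x$ parallel to $e(x)$, and $\ell_r(x)$ the line parallel to $e(x)$, on the same side of $v(x)$ as $x$, with $d(v(x),\ell_r(x))=r\,d(v(x),\ell(x))$. Let $T_r(x)$ be the triangle similar to and with the same orientation as $T(\mathcal{Y})$ having $v(x)$ as a vertex and $\ell_r(x)$ as the line of the opposite edge; set $N^r_{\mathcal{Y}}(x)=T_r(x)\cap T(\mathcal{Y})$. Also $N^\infty_{\mathcal{Y}}(x)=T(\mathcal{Y})$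 for $x\in T(\mathcal{Y})\setminus\mathcal{Y}$, and $N^r_{\mathcal{Y}}(x)=\{x\}$ for $x\in\mathcal{Y}$. Proximity catch digraph: vertex set $\{X_1,\dots,X_n\}$, with an arc $(X_i,X_j)$, $i\neq j$, iff $X_j\in N^r_{\mathcal{Y}}(X_i)$. Its relative density is $\rho(\mathcal{X}_n;h,N^r_{\mathcal{Y}})=|\mathcal{A}|/(n(n-1))$, where $|\mathcal{A}|$ is the number of arcs; equivalently $\frac{1}{n(n-1)}\sum_{i<j}h_{ij}$ with $h_{ij}=\mathbf{I}\{X_j\in N^r_{\mathcal{Y}}(X_i)\}+\mathbf{I}\{X_i\in N^r_{\mathcal{Y}}(X_j)\}$. *)

From HB Require Import structures.
From mathcomp Require Import all_boot all_order all_algebra.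
From mathcomp Require Import all_classical all_reals all_analysis.
Set Implicit Arguments. Unset Strict Implicit. Unset Printing Implicit Defensive.
Import Order.TTheory GRing.Theory Num.Theory.
Local Open Scope classical_set_scope.
Local Open Scope ring_scope.

(* Points of R^2 are pairs (R * R); R * R carries the product (Borel)
   sigma-algebra and the planar Lebesgue measure is the product measure. *)

Section Geometry.
Variable R : realType.
Local Notation pt := (R * R)%type.

Definition padd (p q : pt) : pt := (p.1 + q.1, p.2 + q.2).
Definition psub (p q : pt) : pt := (p.1 - q.1, p.2 - q.2).
Definition pscale (a : R) (p : pt) : pt := (a * p.1, a * p.2).
Definition det2 (u v : pt) : R := u.1 * v.2 - u.2 * v.1.

Definition noncollinear (y1 y2 y3 : pt) : Prop :=
  det2 (psub y2 y1) (psub y3 y1) != 0.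

Definition triangle (y1 y2 y3 : pt) : set pt :=
  [set x | exists a b c : R, [/\ 0 <= a, 0 <= b, 0 <= c, a + b + c = 1 &
      x = padd (pscale a y1) (padd (pscale b y2) (pscale c y3))]].

Definition conv4 (p1 p2 p3 p4 : pt) : set pt :=
  [set x | exists a b c e : R, [/\ [/\ 0 <= a, 0 <= b, 0 <= c & 0 <= e],
      a + b + c + e = 1 &
      x = padd (pscale a p1) (padd (pscale b p2) (padd (pscale c p3) (pscale e p4)))]].

Definition midpt (p q : pt) : pt := pscale (2^-1) (padd p q).
Definition centroid (y1 y2 y3 : pt) : pt := pscale (3^-1) (padd y1 (padd y2 y3)).

Definition vregion (y1 y2 y3 : pt) : set pt :=
  conv4 y1 (midpt y1 y2) (centroid y1 y2 y3) (midpt y1 y3).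

(* (v(x), w1, w2) where v(x) is the vertex whose region contains x and
   e(x) = [w1, w2] is the opposite edge; ties on region boundaries are broken
   by taking the region of smallest index. *)
Definition vsel (y1 y2 y3 x : pt) : pt * pt * pt :=
  if `[< vregion y1 y2 y3 x >] then (y1, y2, y3)
  else if `[< vregion y2 y3 y1 x >] then (y2, y3, y1)
  else (y3, y1, y2).

Definition dist_line (p q u : pt) : R :=
  `|det2 (psub p q) u| / Num.sqrt (u.1 ^+ 2 + u.2 ^+ 2).

(* T_r(x): the triangle similar to T(Y), with the same orientation, having
   v(x) as a vertex and l_r(x) as the line of its opposite edge.  It is the
   image of T(Y) under the homothety of center v(x) and ratio
   d(v(x), l_r(x)) / d(v(x), e(x)) where d(v(x), l_r(x)) = r d(v(x), l(x)),
   l(x) being the line through x parallel to e(x). *)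
Definition Tr (r : R) (y1 y2 y3 x : pt) : set pt :=
  let: (v, w1, w2) := vsel y1 y2 y3 x in
  let u := psub w2 w1 in
  let s := (r * dist_line v x u) / dist_line v w1 u in
  [set padd v (pscale s (psub z v)) | z in triangle y1 y2 y3].

Definition Nprox (r : \bar R) (y1 y2 y3 x : pt) : set pt :=
  if `[< x = y1 \/ x = y2 \/ x = y3 >] then [set x]
  else match r with
       | +oo%E => triangle y1 y2 y3
       | (r0%:E)%E => Tr r0 y1 y2 y3 x `&` triangle y1 y2 y3
       | -oo%E => set0
       end.

Definition rel_density (r : \bar R) (y1 y2 y3 : pt) (n : nat)
    (Xs : 'I_n -> pt) : R :=
  (\sum_(i < n) \sum_(j < n | j != i) \1_(Nprox r y1 y2 y3 (Xs i)) (Xs j))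
  / (n * n.-1)%:R.

End Geometry.

Section Prob.
Context (R : realType) (d : measure_display) (Omega : measurableType d).
Local Notation pt := (R * R)%type.

Definition area : set pt -> \bar R :=
  ((@lebesgue_measure R) \x (@lebesgue_measure R))%E.

Definition uniform_on_triangle (P : probability Omega R) (Z : Omega -> pt)
    (y1 y2 y3 : pt) : Prop :=
  forall A : set pt, measurable A ->
    P (Z @^-1` A) = (area (A `&` triangle y1 y2 y3) / area (triangle y1 y2 y3))%E.

Definition mutually_independent (n : nat) (P : probability Omega R)
    (X : 'I_n -> Omega -> pt) : Prop :=
  forall A : 'I_n -> set pt, (forall i, measurable (A i)) ->
    P (\bigcap_(i in [set: 'I_n]) (X i @^-1` A i)) =
    (\prod_(i < n) P (X i @^-1` A i))%E.

End Prob.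

From HB Require Import structures.
From mathcomp Require Import all_boot all_order all_algebra.
From mathcomp Require Import all_classical all_reals all_analysis.
From mathcomp Require Import lra ring measurable_realfun.
Import Order.TTheory GRing.Theory Num.Theory.
Local Open Scope classical_set_scope.
Local Open Scope ring_scope.

Set Implicit Arguments. Unset Strict Implicit. Unset Printing Implicit Defensive.

(* Everything in the construction is expressed in barycentric coordinates with
   respect to T(Y): membership in T(Y), in the vertex regions, and in N^r_Y(x),
   since T_r(x) is the image of T(Y) under the homothety of center v(x) and
   ratio r (1 - lambda_v(x)).  So the arc relation, hence the relative density,
   is one fixed function of the barycentric coordinates of the sample.  The
   affine map sending Z onto Y preserves barycentric coordinates and multiplies
   areas by a constant, so it carries an independent uniform sample on T(Z) to
   an independent uniform sample on T(Y); two such samples have the same joint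
   law, since independence fixes it on boxes, which generate the product
   sigma-algebra. *)

Section Barycentric.
Variable R : realType.
Local Notation pt := (R * R)%type.
Implicit Types a b c p x w z : pt.

Lemma pt_ext p q : p.1 = q.1 -> p.2 = q.2 -> p = q.
Proof. by case: p q => ? ? [? ?] /= -> ->. Qed.

(* The barycentric coordinate of [p] attached to the vertex [a] of the
   triangle [a b c]; the other two are [bary b c a p] and [bary c a b p]. *)
Definition bary a b c p : R :=
  det2 (psub b p) (psub c p) / det2 (psub b a) (psub c a).

Definition comb3 (al be ga : R) a b c : pt :=
  padd (pscale al a) (padd (pscale be b) (pscale ga c)).

Definition nonneg3 (q1 q2 q3 : R) : bool := [&& 0 <= q1, 0 <= q2 & 0 <= q3].

Definition vertexb (p1 p2 p3 : R) : bool :=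
  [|| [&& p1 == 1, p2 == 0 & p3 == 0], [&& p1 == 0, p2 == 1 & p3 == 0]
    | [&& p1 == 0, p2 == 0 & p3 == 1]].

Definition vregionb (p1 p2 p3 : R) : bool :=
  [&& p2 <= p1, p3 <= p1, 0 <= p2 & 0 <= p3].

(* [w] lies in T_r(x), for [x] in the vertex region of the first vertex; by
   the homothety, [r * |1 - p1|] is the ratio d(v(x), l_r(x)) / d(v(x), e(x)). *)
Definition Trb1 (r0 p1 q1 q2 q3 : R) : bool :=
  [&& 0 <= q2, 0 <= q3 & 1 <= q1 + r0 * `|1 - p1|].

Definition Trb (r0 p1 p2 p3 q1 q2 q3 : R) : bool :=
  if vregionb p1 p2 p3 then Trb1 r0 p1 q1 q2 q3
  else if vregionb p2 p3 p1 then Trb1 r0 p2 q2 q3 q1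
  else Trb1 r0 p3 q3 q1 q2.

Definition Nproxb (r : \bar R) (p1 p2 p3 q1 q2 q3 : R) : bool :=
  if vertexb p1 p2 p3 then [&& q1 == p1, q2 == p2 & q3 == p3]
  else match r with
   | +oo%E => nonneg3 q1 q2 q3
   | (r0%:E)%E => Trb r0 p1 p2 p3 q1 q2 q3 && nonneg3 q1 q2 q3
   | -oo%E => false end.

Lemma nonneg3_cycle q1 q2 q3 : nonneg3 q2 q3 q1 = nonneg3 q1 q2 q3.
Proof. by rewrite /nonneg3 [RHS]andbC andbA. Qed.

Lemma det2_cycle a b c : det2 (psub c b) (psub a b) = det2 (psub b a) (psub c a).
Proof. rewrite /det2 /psub /=; ring. Qed.

Lemma noncollinear_cycle a b c : noncollinear a b c -> noncollinear b c a.
Proof. by rewrite /noncollinear => h; rewrite det2_cycle. Qed.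

Section Triangle.
Variables a b c : pt.
Hypothesis abc : noncollinear a b c.
Let bca := noncollinear_cycle abc.
Let cab := noncollinear_cycle bca.

Lemma bary_sum p : bary a b c p + bary b c a p + bary c a b p = 1.
Proof.
move: abc bca cab; rewrite /noncollinear /bary /det2 /psub /=.
by case: a b c p => [? ?] [? ?] [? ?] [? ?] /= *; field.
Qed.

Lemma bary_decomp p : p = comb3 (bary a b c p) (bary b c a p) (bary c a b p) a b c.
Proof.
move: abc bca cab; rewrite /noncollinear /bary /comb3 /det2 /psub /padd /pscale /=.
by case: a b c p => [? ?] [? ?] [? ?] [? ?] /= *; apply: pt_ext => /=; field.
Qed.

Lemma bary_comb3 al be ga : al + be + ga = 1 ->
  [/\ bary a b c (comb3 al be ga a b c) = al, bary b c a (comb3 al be ga a b c) = be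
     & bary c a b (comb3 al be ga a b c) = ga].
Proof.
move=> s1; have -> : ga = 1 - al - be by lra.
move: abc bca cab; rewrite /noncollinear /bary /comb3 /det2 /psub /padd /pscale /=.
by case: a b c => [? ?] [? ?] [? ?] /= *; split; field.
Qed.

Lemma bary_unique al be ga p : al + be + ga = 1 -> p = comb3 al be ga a b c ->
  [/\ bary a b c p = al, bary b c a p = be & bary c a b p = ga].
Proof. by move=> s1 ->; exact: bary_comb3. Qed.

Lemma bary_inj p q :
  bary a b c p = bary a b c q -> bary b c a p = bary b c a q ->
  bary c a b p = bary c a b q -> p = q.
Proof. by move=> e1 e2 e3; rewrite (bary_decomp p) (bary_decomp q) e1 e2 e3. Qed.

Lemma bary_vertex : [/\ bary a b c a = 1, bary b c a a = 0 & bary c a b a = 0].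
Proof.
by apply: bary_unique; [lra|apply: pt_ext; rewrite /comb3 /padd /pscale /=; ring].
Qed.

Lemma triangle_bary p :
  triangle a b c p <-> nonneg3 (bary a b c p) (bary b c a p) (bary c a b p).
Proof.
split=> [[al [be [ga [al0 be0 ga0 s1 ->]]]]|/and3P[? ? ?]].
  by have [-> -> ->] := bary_comb3 s1; apply/and3P.
exists (bary a b c p), (bary b c a p), (bary c a b p).
by split=> //; [exact: bary_sum|exact: bary_decomp].
Qed.

Lemma vregion_bary x :
  vregion a b c x <-> vregionb (bary a b c x) (bary b c a x) (bary c a b x).
Proof.
split.
  case=> al [be [ga [de [[? ? ? ?] s1 xE]]]].
  have [-> -> ->] : [/\ bary a b c x = al + be / 2 + ga / 3 + de / 2,
      bary b c a x = be / 2 + ga / 3 & bary c a b x = ga / 3 + de / 2].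
    apply: bary_unique; first lra.
    by rewrite xE; apply: pt_ext; rewrite /comb3 /midpt /centroid /padd /pscale /=; field.
  by apply/and4P; split; lra.
have := bary_sum x; rewrite [in X in _ -> _ -> X](bary_decomp x).
move: (bary a b c x) (bary b c a x) (bary c a b x) => la lb lc s1 /and4P[? ? ? ?].
(* A point of the vertex region is a convex combination of [a], the two
   adjacent edge midpoints and the centroid, with one midpoint unused. *)
have [lcb|lbc] := leP lc lb.
  exists (la - lb), (2 * (lb - lc)), (3 * lc), 0; split; [split; lra|lra|].
  by apply: pt_ext; rewrite /comb3 /midpt /centroid /padd /pscale /=; field.
exists (la - lc), 0, (3 * lb), (2 * (lc - lb)); split; [split; lra|lra|].
by apply: pt_ext; rewrite /comb3 /midpt /centroid /padd /pscale /=; field.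
Qed.

Lemma homothety_triangle_bary (s : R) w : 0 <= s ->
  [set padd a (pscale s (psub z a)) | z in triangle a b c] w <->
  [&& 0 <= bary b c a w, 0 <= bary c a b w & 1 <= bary a b c w + s].
Proof.
move=> s0; split.
  case=> z /triangle_bary/and3P[z1 z2 z3] <-.
  have := bary_sum z; rewrite [in X in _ -> X](bary_decomp z).
  move: (bary a b c z) (bary b c a z) (bary c a b z) z1 z2 z3.
  move=> la lb lc la0 lb0 lc0 s1.
  have -> : padd a (pscale s (psub (comb3 la lb lc a b c) a)) =
      comb3 (1 - s + s * la) (s * lb) (s * lc) a b c.
    by apply: pt_ext; rewrite /comb3 /padd /pscale /psub /=; ring.
  have [|-> -> ->] := @bary_comb3 (1 - s + s * la) (s * lb) (s * lc).
    have -> : lc = 1 - la - lb by lra.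
    by ring.
  by apply/and3P; split; [exact: mulr_ge0|exact: mulr_ge0|nra].
move=> /and3P[lb0 lc0 hla]; move: (bary_decomp w) (bary_sum w) lb0 lc0 hla.
move: (bary a b c w) (bary b c a w) (bary c a b w) => la lb lc -> s1 lb0 lc0 hla.
have [s_eq0|sp] := eqVneq s 0.
  have [-> -> ->] : [/\ la = 1, lb = 0 & lc = 0] by split; lra.
  exists a; last by apply: pt_ext; rewrite /comb3 /padd /pscale /psub s_eq0 /=; ring.
  by apply/triangle_bary; have [-> -> ->] := bary_vertex; apply/and3P; split; lra.
exists (comb3 (1 - (1 - la) / s) (lb / s) (lc / s) a b c).
  apply/triangle_bary; have [|-> -> ->] := @bary_comb3 (1 - (1 - la) / s) (lb / s) (lc / s).
    have -> : lc = 1 - la - lb by lra.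
    by field.
  by apply/and3P; split; [rewrite subr_ge0 ler_pdivrMr ?lt0r ?sp //; lra|
    exact: divr_ge0|exact: divr_ge0].
by apply: pt_ext; rewrite /comb3 /padd /pscale /psub /=; field.
Qed.

Lemma dist_line_ratio (r0 : R) x :
  (r0 * dist_line a x (psub c b)) / dist_line a b (psub c b) =
  r0 * `|1 - bary a b c x|.
Proof.
set u := psub c b.
have D0 : det2 (psub a b) u != 0.
  rewrite (_ : det2 _ _ = - det2 (psub b a) (psub c a)) ?oppr_eq0 //.
  by rewrite /det2 /u /psub /=; ring.
have S0 : Num.sqrt (u.1 ^+ 2 + u.2 ^+ 2) != 0.
  rewrite sqrtr_eq0 -ltNge lt0r addr_ge0 ?sqr_ge0 // andbT.
  rewrite paddr_eq0 ?sqr_ge0 // !sqrf_eq0.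
  by apply: contra D0 => /andP[/eqP u1 /eqP u2]; rewrite /det2 u1 u2 !mulr0 subrr.
rewrite /dist_line -mulrA; congr (_ * _).
have d0 : `|det2 (psub a b) u| != 0 by rewrite normr_eq0.
transitivity (`|det2 (psub a x) u| / `|det2 (psub a b) u|).
  by field; rewrite d0 S0.
rewrite -normf_div; congr `| _ |; move: abc D0; rewrite /u; clear d0 S0 u.
rewrite /noncollinear /bary /det2 /psub /=.
by case: a b c x => [? ?] [? ?] [? ?] [? ?] /= h D; field; rewrite h D.
Qed.

Lemma Tr_vertex_bary (r0 : R) x w : 0 <= r0 ->
  ([set padd a (pscale ((r0 * dist_line a x (psub c b)) / dist_line a b (psub c b))
      (psub z a)) | z in triangle a b c] `&` triangle a b c) w <->
  Trb1 r0 (bary a b c x) (bary a b c w) (bary b c a w) (bary c a b w)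
  && nonneg3 (bary a b c w) (bary b c a w) (bary c a b w).
Proof.
move=> r00; rewrite dist_line_ratio /Trb1.
have s0 := mulr_ge0 r00 (normr_ge0 (1 - bary a b c x)).
split=> [[/(homothety_triangle_bary _ s0) -> /triangle_bary ->] //|].
by case/andP=> /(homothety_triangle_bary _ s0) ? /triangle_bary ?.
Qed.

End Triangle.

Section Cycle.
Variables a b c : pt.
Hypothesis abc : noncollinear a b c.
Let bca := noncollinear_cycle abc.
Let cab := noncollinear_cycle bca.

Lemma triangle_cycle : triangle a b c = triangle b c a.
Proof.
apply/funext => p; apply/propext.
by rewrite (triangle_bary abc p) (triangle_bary bca p) [in X in _ <-> X]nonneg3_cycle.
Qed.

Lemma vertex_bary x : (x = a \/ x = b \/ x = c) <->
  vertexb (bary a b c x) (bary b c a x) (bary c a b x).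
Proof.
split.
  case=> [->|[->|->]]; rewrite /vertexb.
  - by have [-> -> ->] := bary_vertex abc; rewrite !eqxx.
  - by have [-> -> ->] := bary_vertex bca; rewrite !eqxx orbT.
  - by have [-> -> ->] := bary_vertex cab; rewrite !eqxx !orbT.
rewrite [in X in _ -> X](bary_decomp abc x) /vertexb.
move: (bary a b c x) (bary b c a x) (bary c a b x) => p1 p2 p3.
by case/or3P => /and3P[/eqP-> /eqP-> /eqP->]; [left|right; left|right; right];
  apply: pt_ext; rewrite /comb3 /padd /pscale /=; ring.
Qed.

End Cycle.

Definition arcb (r : \bar R) y1 y2 y3 x w : bool :=
  Nproxb r (bary y1 y2 y3 x) (bary y2 y3 y1 x) (bary y3 y1 y2 x)
           (bary y1 y2 y3 w) (bary y2 y3 y1 w) (bary y3 y1 y2 w).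

Lemma Nprox_bary (r : \bar R) y1 y2 y3 x w : noncollinear y1 y2 y3 -> (1 <= r)%E ->
  Nprox r y1 y2 y3 x w <-> arcb r y1 y2 y3 x w.
Proof.
move=> h1 r1; have h2 := noncollinear_cycle h1; have h3 := noncollinear_cycle h2.
rewrite /Nprox /arcb /Nproxb (asbool_equiv_eqP idP (vertex_bary h1 x)).
case: ifP => _.
  split=> [->|/and3P[/eqP e1 /eqP e2 /eqP e3]]; first by rewrite !eqxx.
  exact: (bary_inj h1 e1 e2 e3 : [set x] w).
case: r r1 => [r0 r1| _ |//]; last exact: triangle_bary.
have r00 : 0 <= r0 by rewrite -lee_fin (le_trans _ r1).
rewrite /Tr /vsel /Trb (asbool_equiv_eqP idP (vregion_bary h1 x)).
rewrite (asbool_equiv_eqP idP (vregion_bary h2 x)).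
case: ifP => _; first exact: Tr_vertex_bary.
case: ifP => _; first by rewrite (triangle_cycle h1) -nonneg3_cycle; exact: Tr_vertex_bary.
by rewrite -(triangle_cycle h3) -2!nonneg3_cycle; exact: Tr_vertex_bary.
Qed.

Lemma rel_densityE (r : \bar R) y1 y2 y3 n (xs : 'I_n -> pt) :
  noncollinear y1 y2 y3 -> (1 <= r)%E ->
  rel_density r y1 y2 y3 xs =
  (\sum_(i < n) \sum_(j < n | j != i) (arcb r y1 y2 y3 (xs i) (xs j))%:R)
  / (n * n.-1)%:R.
Proof.
move=> h r1; rewrite /rel_density; congr (_ / _).
apply: eq_bigr => i _; apply: eq_bigr => j _.
rewrite indicE (_ : _ \in _ = arcb r y1 y2 y3 (xs i) (xs j)) //.
exact: asbool_equiv_eqP idP (Nprox_bary _ _ h r1).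
Qed.

Definition bary_map y1 y2 y3 z1 z2 z3 p : pt :=
  comb3 (bary y1 y2 y3 p) (bary y2 y3 y1 p) (bary y3 y1 y2 p) z1 z2 z3.

Section BaryMap.
Variables y1 y2 y3 z1 z2 z3 : pt.
Hypotheses (hy : noncollinear y1 y2 y3) (hz : noncollinear z1 z2 z3).

Local Notation f := (bary_map y1 y2 y3 z1 z2 z3).

Lemma bary_map_bary p :
  [/\ bary z1 z2 z3 (f p) = bary y1 y2 y3 p, bary z2 z3 z1 (f p) = bary y2 y3 y1 p
    & bary z3 z1 z2 (f p) = bary y3 y1 y2 p].
Proof. exact: (bary_comb3 hz (bary_sum hy p)). Qed.

Lemma bary_mapK : cancel f (bary_map z1 z2 z3 y1 y2 y3).
Proof.
by move=> p; have [e1 e2 e3] := bary_map_bary p; rewrite /bary_map e1 e2 e3 -bary_decomp.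
Qed.

Lemma triangle_bary_map p :
  triangle z1 z2 z3 (f p) <-> triangle y1 y2 y3 p.
Proof.
by rewrite (triangle_bary hz) (triangle_bary hy); have [-> -> ->] := bary_map_bary p.
Qed.

Lemma arcb_bary_map r x w :
  arcb r z1 z2 z3 (f x) (f w) = arcb r y1 y2 y3 x w.
Proof.
by rewrite /arcb; have [-> -> ->] := bary_map_bary x; have [-> -> ->] := bary_map_bary w.
Qed.

Lemma rel_density_bary_map r n (xs : 'I_n -> pt) : (1 <= r)%E ->
  rel_density r z1 z2 z3 (fun i => f (xs i)) = rel_density r y1 y2 y3 xs.
Proof.
move=> r1; rewrite !rel_densityE //; congr (_ / _).
by apply: eq_bigr => i _; apply: eq_bigr => j _; rewrite arcb_bary_map.
Qed.

End BaryMap.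

End Barycentric.

Section Measurability.
Variable R : realType.
Local Notation pt := (R * R)%type.

Lemma bary_affine (a b c : pt) :
  exists k0 k1 k2 : R, forall p, bary a b c p = k0 + k1 * p.1 + k2 * p.2.
Proof.
set D := det2 (psub b a) (psub c a).
exists ((b.1 * c.2 - b.2 * c.1) / D), ((b.2 - c.2) / D), ((c.1 - b.1) / D) => p.
by rewrite /bary -/D /det2 /psub /=; ring.
Qed.

Lemma measurable_bary (a b c : pt) : measurable_fun [set: pt] (bary a b c).
Proof.
have [k0 [k1 [k2 E]]] := bary_affine a b c; rewrite (funext E).
apply: measurable_funD; last by apply: measurable_funM; [exact: measurable_cst|exact: measurable_snd].
apply: measurable_funD; first exact: measurable_cst.
by apply: measurable_funM; [exact: measurable_cst|exact: measurable_fst].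
Qed.

Section BoolMeasurable.
Context d (T : measurableType d).
Implicit Types f g h : T -> R.

Lemma measurable_nonneg3 f g h : measurable_fun setT f -> measurable_fun setT g ->
  measurable_fun setT h -> measurable_fun [set: T] (fun t => nonneg3 (f t) (g t) (h t)).
Proof.
move=> mf mg mh; rewrite /nonneg3.
by do 2?apply: measurable_and; apply: measurable_fun_ler => //; exact: measurable_cst.
Qed.

Lemma measurable_vregionb f g h : measurable_fun setT f -> measurable_fun setT g ->
  measurable_fun setT h -> measurable_fun [set: T] (fun t => vregionb (f t) (g t) (h t)).
Proof.
move=> mf mg mh; rewrite /vregionb.
by do 3?apply: measurable_and; apply: measurable_fun_ler => //; exact: measurable_cst.
Qed.

Lemma measurable_vertexb f g h : measurable_fun setT f -> measurable_fun setT g ->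
  measurable_fun setT h -> measurable_fun [set: T] (fun t => vertexb (f t) (g t) (h t)).
Proof.
move=> mf mg mh; rewrite /vertexb.
by do 2?apply: measurable_or; do 2?apply: measurable_and;
  apply: measurable_fun_eqr => //; exact: measurable_cst.
Qed.

Lemma measurable_Trb1 (r0 : R) p f g h : measurable_fun setT p ->
  measurable_fun setT f -> measurable_fun setT g -> measurable_fun setT h ->
  measurable_fun [set: T] (fun t => Trb1 r0 (p t) (f t) (g t) (h t)).
Proof.
move=> mp mf mg mh; rewrite /Trb1.
do 2?apply: measurable_and; apply: measurable_fun_ler => //; try exact: measurable_cst.
apply: measurable_funD => //; apply: measurable_funM; first exact: measurable_cst.
apply: measurableT_comp; first exact: normr_measurable.
by apply: measurable_funB => //; exact: measurable_cst.
Qed.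

Lemma measurable_Nproxb (r : \bar R) p1 p2 p3 q1 q2 q3 :
  measurable_fun setT p1 -> measurable_fun setT p2 -> measurable_fun setT p3 ->
  measurable_fun setT q1 -> measurable_fun setT q2 -> measurable_fun setT q3 ->
  measurable_fun [set: T] (fun t => Nproxb r (p1 t) (p2 t) (p3 t) (q1 t) (q2 t) (q3 t)).
Proof.
move=> mp1 mp2 mp3 mq1 mq2 mq3; rewrite /Nproxb.
apply: measurable_fun_ifT; first exact: measurable_vertexb.
  by do 2?apply: measurable_and; exact: measurable_fun_eqr.
case: r => [r0||] /=; [|exact: measurable_nonneg3|exact: measurable_cst].
apply: measurable_and; last exact: measurable_nonneg3.
rewrite /Trb; apply: measurable_fun_ifT;
  [exact: measurable_vregionb|exact: measurable_Trb1|].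
by apply: measurable_fun_ifT;
  [exact: measurable_vregionb|exact: measurable_Trb1|exact: measurable_Trb1].
Qed.

End BoolMeasurable.

Lemma measurable_arcb (r : \bar R) (y1 y2 y3 : pt) :
  measurable_fun [set: pt * pt] (fun q => arcb r y1 y2 y3 q.1 q.2).
Proof.
have m1 a b c : measurable_fun [set: pt * pt] (fun q => bary a b c q.1).
  exact: measurableT_comp (measurable_bary a b c) measurable_fst.
have m2 a b c : measurable_fun [set: pt * pt] (fun q => bary a b c q.2).
  exact: measurableT_comp (measurable_bary a b c) measurable_snd.
exact: measurable_Nproxb.
Qed.

End Measurability.

Section Sample.
Variables (R : realType) (n : nat).
Local Notation pt := (R * R)%type.

Definition sample := 'I_n -> pt.
HB.instance Definition _ := gen_eqMixin sample.
HB.instance Definition _ := gen_choiceMixin sample.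
HB.instance Definition _ := isPointed.Build sample (fun _ => (0, 0)).

Definition box (A : 'I_n -> set pt) : set sample := [set xs | forall i, A i (xs i)].

Definition boxes : set (set sample) :=
  [set box A | A in [set A | forall i, measurable (A i)]].

End Sample.

(* Samples carry the product sigma-algebra, generated by measurable boxes. *)
Notation samples R n := (g_sigma_algebraType (@boxes R n)).

Section SampleMeasurability.
Variables (R : realType) (n : nat).

Lemma measurable_coord i : measurable_fun [set: samples R n] (fun xs => xs i).
Proof.
move=> _ A mA; rewrite setTI; apply: sub_sigma_algebra.
exists (fun j => if j == i then A else setT); first by move=> j; case: eqP.
apply/seteqP; split=> xs /=; first by move/(_ i); rewrite eqxx.
by move=> Ax j; case: eqP => // ->.
Qed.

Lemma measurable_natr_bool d (T : measurableType d) (f : T -> bool) :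
  measurable_fun setT f -> measurable_fun [set: T] (fun t => (f t)%:R : R).
Proof.
move=> mf; rewrite (_ : (fun t => _) = fun t => if f t then 1 else 0).
  by apply: measurable_fun_ifT => //; exact: measurable_cst.
by apply/funext => t; case: (f t).
Qed.

Lemma measurable_rel_density (r : \bar R) y1 y2 y3 :
  noncollinear y1 y2 y3 -> (1 <= r)%E ->
  measurable_fun [set: samples R n] (fun xs => rel_density r y1 y2 y3 xs).
Proof.
move=> h r1; rewrite (funext (fun xs => rel_densityE xs h r1)).
apply: measurable_funM; last exact: measurable_cst.
apply: measurable_sum => i; under eq_fun do rewrite big_mkcond.
apply: measurable_sum => j; case: (j != i); last exact: measurable_cst.
apply: measurable_natr_bool.
exact: (measurableT_comp (measurable_arcb r y1 y2 y3)
  (measurable_fun_pair (measurable_coord i) (measurable_coord j))).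
Qed.

End SampleMeasurability.

Section AffineLebesgue.
Variable R : realType.
Local Notation pt := (R * R)%type.

Lemma measurable_affine1 (c t : R) :
  measurable_fun [set: measurableTypeR R] (fun y => c * y + t).
Proof.
apply: measurable_funD; last exact: measurable_cst.
by apply: measurable_funM; [exact: measurable_cst|exact: measurable_id].
Qed.

Lemma lebesgue_measure_affine1_preimage (c t : R) (S : set R) : c != 0 ->
  measurable S ->
  lebesgue_measure ((fun y => c * y + t) @^-1` S) =
  ((`|c|^-1)%:E * lebesgue_measure S)%E.
Proof.
move=> c0 mS.
suff lebE A : measurable A ->
    lebesgue_measure A = (`|c|%:E * lebesgue_measure ((fun y => c * y + t)%R @^-1` A))%E.
  by rewrite [in RHS]lebE // muleA -EFinM mulVf ?normr_eq0 // mul1e.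
(* [mf] in the context is what makes the pushforward below a measure. *)
have mf := measurable_affine1 c t.
move: A; apply: (@lebesgue_measure_unique R
  (mscale (`|c|)%:nng
    (@pushforward _ _ _ (measurableTypeR R) _ lebesgue_measure (fun y => c * y + t)))).
move=> _ [[a b] _ <-] /=.
rewrite /mscale lebesgue_measure_itv /=; unfold pushforward.
have [cp|cn] := ltP 0 c.
  rewrite (_ : _ @^-1` _ = `](a - t) / c, (b - t) / c]%classic); last first.
    apply/seteqP; split => y /=; rewrite !in_itv /= ltr_pdivrMr // ler_pdivlMr //.
      by case/andP => h1 h2; apply/andP; split; lra.
    by case/andP => h1 h2; apply/andP; split; lra.
  rewrite lebesgue_measure_itv /= !lte_fin ltr_pM2r ?invr_gt0 // ltrBlDr subrK.
  case: ifP => _; last by rewrite mule0.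
  by rewrite -EFinB -EFinM gtr0_norm //; congr (_%:E); field; rewrite gt_eqF.
have cn' : c < 0 by rewrite lt_neqAle c0 cn.
rewrite (_ : _ @^-1` _ = `[(b - t) / c, (a - t) / c[%classic); last first.
  apply/seteqP; split => y /=; rewrite !in_itv /= ler_ndivrMr // ltr_ndivlMr //.
    by case/andP => h1 h2; apply/andP; split; lra.
  by case/andP => h1 h2; apply/andP; split; lra.
rewrite lebesgue_measure_itv /= !lte_fin ltr_nM2r ?invr_lt0 // ltrBlDr subrK.
case: ifP => _; last by rewrite mule0.
by rewrite -EFinB -EFinM ltr0_norm //; congr (_%:E); field; rewrite lt_eqF.
Qed.

Lemma area_ysectionE (E : set pt) : measurable E ->
  area E = ((@lebesgue_measure R) \x^ (@lebesgue_measure R))%E E.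
Proof.
move=> mE; apply: product_measure_unique => // A B mA mB.
exact: product_measure2E.
Qed.

Definition shear_y (c k t : R) (p : pt) : pt := (p.1, c * p.2 + (k * p.1 + t)).
Definition shear_x (c k t : R) (p : pt) : pt := (c * p.1 + (k * p.2 + t), p.2).

Lemma measurable_shear_y c k t : measurable_fun [set: pt] (shear_y c k t).
Proof.
apply: measurable_fun_pair; first exact: measurable_fst.
apply: measurable_funD.
  by apply: measurable_funM; [exact: measurable_cst|exact: measurable_snd].
apply: measurable_funD; last exact: measurable_cst.
by apply: measurable_funM; [exact: measurable_cst|exact: measurable_fst].
Qed.

Lemma measurable_shear_x c k t : measurable_fun [set: pt] (shear_x c k t).
Proof.
apply: measurable_fun_pair; last exact: measurable_snd.
apply: measurable_funD.
  by apply: measurable_funM; [exact: measurable_cst|exact: measurable_fst].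
apply: measurable_funD; last exact: measurable_cst.
by apply: measurable_funM; [exact: measurable_cst|exact: measurable_snd].
Qed.

(* Each section of a shear is an affine image of the corresponding section. *)
Lemma area_shear_y c k t (E : set pt) : c != 0 -> measurable E ->
  area (shear_y c k t @^-1` E) = ((`|c|^-1)%:E * area E)%E.
Proof.
move=> c0 mE; rewrite /area /product_measure1.
rewrite -ge0_integralZl_EFin //; last exact: measurable_fun_xsection.
apply: eq_integral => x _ /=.
by rewrite -(lebesgue_measure_affine1_preimage (k * x + t) c0) //; exact: measurable_xsection.
Qed.

Lemma area_shear_x c k t (E : set pt) : c != 0 -> measurable E ->
  area (shear_x c k t @^-1` E) = ((`|c|^-1)%:E * area E)%E.
Proof.
move=> c0 mE; have mE' : measurable (shear_x c k t @^-1` E).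
  by rewrite -[X in measurable X]setTI; exact: measurable_shear_x.
rewrite !area_ysectionE // /product_measure2.
rewrite -ge0_integralZl_EFin //; last exact: measurable_fun_ysection.
apply: eq_integral => y _ /=.
by rewrite -(lebesgue_measure_affine1_preimage (k * y + t) c0) //; exact: measurable_ysection.
Qed.

Definition affine2 (a b c d e f : R) (p : pt) : pt :=
  (a * p.1 + b * p.2 + e, c * p.1 + d * p.2 + f).

Lemma measurable_affine2 a b c d e f : measurable_fun [set: pt] (affine2 a b c d e f).
Proof.
apply: measurable_fun_pair; (apply: measurable_funD; last exact: measurable_cst);
  (apply: measurable_funD;
  [ by apply: measurable_funM; [exact: measurable_cst|exact: measurable_fst]
  | by apply: measurable_funM; [exact: measurable_cst|exact: measurable_snd]]).
Qed.

(* For [a != 0], [affine2] factors as a shear along x followed by a shear along y. *)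
Lemma area_affine2_preimage_pivot a b c d e f (E : set pt) : a != 0 ->
  a * d - b * c != 0 -> measurable E ->
  area (affine2 a b c d e f @^-1` E) = ((`|a * d - b * c|^-1)%:E * area E)%E.
Proof.
move=> a0 D0 mE.
have -> : affine2 a b c d e f =
    shear_y ((a * d - b * c) / a) (c / a) (f - c * e / a) \o shear_x a b e.
  apply/funext => p; apply: pt_ext; rewrite /shear_y /shear_x /affine2 /=; first by ring.
  by field.
rewrite comp_preimage area_shear_x //; last first.
  by rewrite -[X in measurable X]setTI; exact: measurable_shear_y.
rewrite area_shear_y //; last by rewrite mulf_neq0 // invr_eq0.
rewrite muleA -EFinM normf_div; congr (_%:E * _)%E.
by field; rewrite !normr_eq0 a0 D0.
Qed.

Lemma area_affine2_preimage a b c d e f (E : set pt) : a * d - b * c != 0 ->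
  measurable E ->
  area (affine2 a b c d e f @^-1` E) = ((`|a * d - b * c|^-1)%:E * area E)%E.
Proof.
move=> D0 mE; have [a0|a0] := eqVneq a 0; last exact: area_affine2_preimage_pivot.
have b0 : b != 0 by apply: contra D0 => /eqP ->; rewrite a0 !mul0r subrr.
have -> : affine2 a b c d e f = affine2 (a - b) b (c - d) d e f \o shear_y 1 1 0.
  by apply/funext => p; apply: pt_ext; rewrite /shear_y /affine2 /=; ring.
rewrite comp_preimage area_shear_y ?oner_eq0 //; last first.
  by rewrite -[X in measurable X]setTI; exact: measurable_affine2.
have D' : (a - b) * d - b * (c - d) = a * d - b * c by ring.
rewrite area_affine2_preimage_pivot ?D' //; last by rewrite a0 sub0r oppr_eq0.
by rewrite normr1 invr1 mul1e.
Qed.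

Lemma affine2_inj_det a b c d e f : injective (affine2 a b c d e f) -> a * d - b * c != 0.
Proof.
move=> inj; apply/negP => /eqP D0.
have ker u v : a * u + b * v = 0 -> c * u + d * v = 0 -> u = 0 /\ v = 0.
  move=> h1 h2; have := inj (u, v) (0, 0).
  by rewrite /affine2 /= h1 h2 !mulr0 !addr0 => /(_ erefl) [].
(* A singular linear part kills both (b, -a) and (d, -c), hence vanishes. *)
have [b0 na0] : b = 0 /\ - a = 0 by apply: ker; [ring|rewrite -[RHS]oppr0 -D0; ring].
have [d0 nc0] : d = 0 /\ - c = 0 by apply: ker; [rewrite -D0; ring|ring].
have [] : (1 : R) = 0 /\ (0 : R) = 0 by apply: ker; [rewrite b0; lra|rewrite d0; lra].
by move/eqP; rewrite oner_eq0.
Qed.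

End AffineLebesgue.

Section UniformTransfer.
Variable R : realType.
Local Notation pt := (R * R)%type.

Lemma bary_map_affine2 (y1 y2 y3 z1 z2 z3 : pt) :
  exists a b c d e f : R, bary_map y1 y2 y3 z1 z2 z3 = affine2 a b c d e f.
Proof.
have [k0 [k1 [k2 E1]]] := bary_affine y1 y2 y3.
have [l0 [l1 [l2 E2]]] := bary_affine y2 y3 y1.
have [m0 [m1 [m2 E3]]] := bary_affine y3 y1 y2.
exists (k1 * z1.1 + l1 * z2.1 + m1 * z3.1), (k2 * z1.1 + l2 * z2.1 + m2 * z3.1),
  (k1 * z1.2 + l1 * z2.2 + m1 * z3.2), (k2 * z1.2 + l2 * z2.2 + m2 * z3.2),
  (k0 * z1.1 + l0 * z2.1 + m0 * z3.1), (k0 * z1.2 + l0 * z2.2 + m0 * z3.2).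
apply/funext => p; rewrite /bary_map /comb3 E1 E2 E3.
by apply: pt_ext; rewrite /padd /pscale /affine2 /=; ring.
Qed.

Lemma measurable_bary_map (y1 y2 y3 z1 z2 z3 : pt) :
  measurable_fun [set: pt] (bary_map y1 y2 y3 z1 z2 z3).
Proof.
by have [a [b [c [d [e [f ->]]]]]] := bary_map_affine2 y1 y2 y3 z1 z2 z3;
  exact: measurable_affine2.
Qed.

Lemma area_bary_map_preimage (y1 y2 y3 z1 z2 z3 : pt) :
  noncollinear y1 y2 y3 -> noncollinear z1 z2 z3 ->
  exists2 k : R, 0 < k & forall E, measurable E ->
    area (bary_map y1 y2 y3 z1 z2 z3 @^-1` E) = (k%:E * area E)%E.
Proof.
move=> hy hz; have inj := can_inj (bary_mapK hy hz).
have [a [b [c [d [e [f fE]]]]]] := bary_map_affine2 y1 y2 y3 z1 z2 z3.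
rewrite fE in inj *; have D0 := affine2_inj_det inj.
exists `|a * d - b * c|^-1; first by rewrite invr_gt0 normr_gt0.
by move=> E mE; rewrite area_affine2_preimage.
Qed.

Lemma ediv_scale (k : R) (x y : \bar R) : 0 < k -> (0 <= x)%E -> (0 <= y)%E ->
  ((k%:E * x) / (k%:E * y) = x / y)%E.
Proof.
move=> k0; case: x => [s||]; case: y => [r||] //= hs hr.
- have {}hs : 0 <= s by rewrite -lee_fin.
  have {}hr : 0 <= r by rewrite -lee_fin.
  rewrite -!EFinM !inver mulf_eq0 (gt_eqF k0) /=.
  have [_|r0] := eqVneq r 0.
    have [s0|s0] := eqVneq s 0; first by rewrite s0 !mulr0 !mul0e.
    by rewrite !gt0_muley // lte_fin ?mulr_gt0 // lt_neqAle eq_sym s0 hs.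
  by rewrite -!EFinM; congr (_%:E); field; rewrite r0 gt_eqF.
- by rewrite gt0_muley ?lte_fin // invey !mule0.
- have {}hr : 0 <= r by rewrite -lee_fin.
  rewrite -EFinM gt0_muley ?lte_fin // !inver.
  rewrite mulf_eq0 (gt_eqF k0) /=; have [//|r0] := eqVneq r 0.
  by rewrite !gt0_mulye // lte_fin ?invr_gt0 ?mulr_gt0 // lt_neqAle eq_sym r0 hr.
- by rewrite gt0_muley ?lte_fin.
Qed.

Lemma measurable_triangle (y1 y2 y3 : pt) : noncollinear y1 y2 y3 ->
  measurable (triangle y1 y2 y3).
Proof.
move=> h; rewrite (_ : triangle y1 y2 y3 = (fun p =>
    nonneg3 (bary y1 y2 y3 p) (bary y2 y3 y1 p) (bary y3 y1 y2 p)) @^-1` [set true]).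
  rewrite -[X in measurable X]setTI; apply: measurable_nonneg3 => //;
    exact: measurable_bary.
by apply/funext => p; apply/propext; rewrite (triangle_bary h).
Qed.

Lemma uniform_bary_map d (Omega : measurableType d) (P : probability Omega R)
    (Z : Omega -> pt) (y1 y2 y3 z1 z2 z3 : pt) :
  noncollinear y1 y2 y3 -> noncollinear z1 z2 z3 ->
  uniform_on_triangle P Z z1 z2 z3 ->
  uniform_on_triangle P (bary_map z1 z2 z3 y1 y2 y3 \o Z) y1 y2 y3.
Proof.
move=> hy hz hu A mA; set f := bary_map z1 z2 z3 y1 y2 y3.
have mpre E : measurable E -> measurable (f @^-1` E).
  by move=> mE; rewrite -[X in measurable X]setTI; exact: measurable_bary_map.
have mAT : measurable (A `&` triangle y1 y2 y3).
  by apply: measurableI => //; exact: measurable_triangle.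
have [k k0 hk] := area_bary_map_preimage hz hy.
rewrite comp_preimage hu; last exact: mpre.
have fT : triangle z1 z2 z3 = f @^-1` triangle y1 y2 y3.
  by apply/funext => p; apply/propext; rewrite /preimage /= (triangle_bary_map hz hy).
rewrite fT -preimage_setI (hk _ mAT) (hk _ (measurable_triangle hy)).
by rewrite ediv_scale // measure_ge0.
Qed.

End UniformTransfer.

Section JointLaw.
Variables (R : realType) (n : nat).
Local Notation pt := (R * R)%type.

Definition vec (T : Type) (X : 'I_n -> T -> pt) (w : T) : samples R n := fun i => X i w.

Lemma vec_preimage_box (T : Type) (X : 'I_n -> T -> pt) A :
  vec X @^-1` box A = \bigcap_(i in [set: 'I_n]) (X i @^-1` A i).
Proof. by apply/seteqP; split=> w /= h i; [move=> _|]; exact: h. Qed.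

Lemma measurable_vec d (T : measurableType d) (X : 'I_n -> T -> pt) :
  (forall i, measurable_fun setT (X i)) -> measurable_fun [set: T] (vec X).
Proof.
move=> mX; apply: measurability; first reflexivity.
move=> _ [_ [A mA <-] <-]; rewrite setTI vec_preimage_box.
apply: fin_bigcap_measurable; first exact: finite_finset.
by move=> i _; rewrite -[X in measurable X]setTI; exact: mX.
Qed.

Lemma setI_closed_boxes : setI_closed (@boxes R n).
Proof.
move=> _ _ [A mA <-] [B mB <-]; exists (fun i => A i `&` B i).
  by move=> i; exact: measurableI.
by apply/seteqP; split=> xs /=; [move=> h; split=> i; case: (h i)|case=> hA hB i].
Qed.

Lemma boxes_setT : @boxes R n [set: sample R n].
Proof. by exists (fun=> setT) => //; apply/seteqP; split. Qed.

Section Law.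
Context d (Omega : measurableType d) (P : probability Omega R).

Lemma mutually_independent_comp (X : 'I_n -> Omega -> pt) (f : pt -> pt) :
  measurable_fun setT f -> mutually_independent P X ->
  mutually_independent P (fun i => f \o X i).
Proof.
move=> mf hX A mA; apply: (hX (fun i => f @^-1` A i)) => i.
by rewrite -[X in measurable X]setTI; exact: mf.
Qed.

Lemma law_vec_box (X : 'I_n -> Omega -> pt) (y1 y2 y3 : pt) A :
  mutually_independent P X -> (forall i, uniform_on_triangle P (X i) y1 y2 y3) ->
  (forall i, measurable (A i)) ->
  P (vec X @^-1` box A) =
  (\prod_(i < n) (area (A i `&` triangle y1 y2 y3) / area (triangle y1 y2 y3)))%E.
Proof.
by move=> hX hu mA; rewrite vec_preimage_box hX //; apply: eq_bigr => i _; exact: hu.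
Qed.

End Law.

(* The law of an independent uniform sample is determined by its values on
   boxes, which independence computes. *)
Lemma law_vec_unique (y1 y2 y3 : pt)
    d (Omega : measurableType d) (P : probability Omega R) (X : 'I_n -> Omega -> pt)
    d' (Omega' : measurableType d') (P' : probability Omega' R)
    (X' : 'I_n -> Omega' -> pt) :
  (forall i, measurable_fun setT (X i)) -> mutually_independent P X ->
  (forall i, uniform_on_triangle P (X i) y1 y2 y3) ->
  (forall i, measurable_fun setT (X' i)) -> mutually_independent P' X' ->
  (forall i, uniform_on_triangle P' (X' i) y1 y2 y3) ->
  forall S : set (samples R n), measurable S -> P (vec X @^-1` S) = P' (vec X' @^-1` S).
Proof.
move=> mX hX hu mX' hX' hu'.
have cover : \bigcup_(k : nat) [set: samples R n] = [set: samples R n].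
  by apply/seteqP; split=> // xs _; exists 0%N.
have := @measure_unique _ R (samples R n) (@boxes R n) (fun=> setT) erefl setI_closed_boxes
  (fun=> boxes_setT) cover (pushforward P (vec X)) (pushforward P' (vec X')).
move=> /(_ (measurable_vec mX) (measurable_vec mX')); apply.
- by move=> _ [A mA <-]; exact: etrans (law_vec_box hX hu mA) (esym (law_vec_box hX' hu' mA)).
- by move=> _; exact: le_lt_trans (probability_le1 P measurableT) (ltry 1).
Qed.

End JointLaw.

Unset Implicit Arguments.

Theorem theorem1 (R : realType) (r : \bar R) (hr : (1 <= r)%E) (n : nat)
  (y1 y2 y3 : R * R) (hY : noncollinear y1 y2 y3)
  (z1 z2 z3 : R * R) (hZ : noncollinear z1 z2 z3)
  (d : measure_display) (Omega : measurableType d) (P : probability Omega R)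
  (X : 'I_n -> Omega -> R * R)
  (hXm : forall i, measurable_fun setT (X i))
  (hXi : mutually_independent P X)
  (hXu : forall i, uniform_on_triangle P (X i) y1 y2 y3)
  (d' : measure_display) (Omega' : measurableType d') (P' : probability Omega' R)
  (X' : 'I_n -> Omega' -> R * R)
  (hX'm : forall i, measurable_fun setT (X' i))
  (hX'i : mutually_independent P' X')
  (hX'u : forall i, uniform_on_triangle P' (X' i) z1 z2 z3) :
  forall B : set R, measurable B ->
    P ((fun w => rel_density r y1 y2 y3 (fun i => X i w)) @^-1` B) =
    P' ((fun w => rel_density r z1 z2 z3 (fun i => X' i w)) @^-1` B).
Proof.
move=> B mB; set f := bary_map z1 z2 z3 y1 y2 y3.
have mf : measurable_fun setT f := measurable_bary_map z1 z2 z3 y1 y2 y3.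
have hYm i : measurable_fun setT (f \o X' i) := measurableT_comp mf (hX'm i).
have hYu i : uniform_on_triangle P' (f \o X' i) y1 y2 y3 := uniform_bary_map hY hZ (hX'u i).
have mS : measurable ((fun xs : samples R n => rel_density r y1 y2 y3 xs) @^-1` B).
  by rewrite -[X in measurable X]setTI; exact: measurable_rel_density.
rewrite [in RHS](_ : (fun w => _) = fun w => rel_density r y1 y2 y3 (fun i => f (X' i w)));
  last by apply/funext => w; rewrite rel_density_bary_map.
exact: (law_vec_unique hXm hXi hXu hYm (mutually_independent_comp mf hX'i) hYu mS).
Qed.
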